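(* Let $G=\langle X\rangle$ be a $\delta$-hyperbolic group, $\delta$ a positive integer, and let $V$ be a cyclically minimal word over $X\cup X^{-1}$ with $\|V\|\ge\alpha$, where $\alpha=180\delta$. Then for each $k\in\mathbb Z$, $V^k$ is a $(4,2520\delta)$-quasi-geodesic word in $\Gamma(G,X)$.
   Context: $X$ is finite; $G$ is $\delta$-hyperbolic if every geodesic triangle in the Cayley graph $\Gamma(G,X)$ is $\delta$-slim (each side lies in the $\delta$-neighborhood of the union of the other two). $\|W\|$ denotes the length of a word $W$. A word $V$ is cyclically minimal if $\|V\|$ is minimal among the lengths of all words representing elements conjugate in $G$ to the element represented by $V$. A word $W$ is $(\lambda,c)$-quasi-geodesic if every path $p$ in $\Gamma(G,X)$ labeled by $W$, parametrized by length, satisfies $|s-t|\le\lambda\, d(p(s),p(t))+c$ for all $s,t$. *)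

From Stdlib Require Import Reals Lra Lia ZArith Arith List ClassicalEpsilon.
Import ListNotations.
Open Scope R_scope.

Record group := Group {
  gcar :> Type;
  gmul : gcar -> gcar -> gcar;
  ginv : gcar -> gcar;
  gone : gcar;
  gassoc : forall x y z, gmul x (gmul y z) = gmul (gmul x y) z;
  gone_l : forall x, gmul gone x = x;
  ginv_l : forall x, gmul (ginv x) x = gone
}.

Section Cayley.
Variable Gr : group.
(** The finite generating set X, given as a duplicate-free list. *)
Variable X : list Gr.

Local Notation "x * y" := (gmul Gr x y).

(** Letters of the alphabet X ∪ X^{-1}: (i, true) is x_i, (i, false) is x_i^{-1}. *)
Definition letter := (nat * bool)%type.
Definition valid_letter (a : letter) : Prop := (fst a < length X)%nat.
Definition lval (a : letter) : Gr :=
  if snd a then nth (fst a) X (gone Gr) else ginv Gr (nth (fst a) X (gone Gr)).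
Definition lflip (a : letter) : letter := (fst a, negb (snd a)).

Definition is_word (w : list letter) : Prop := Forall valid_letter w.
Definition eval (w : list letter) : Gr := fold_right (fun a acc => lval a * acc) (gone Gr) w.
Definition wlength (w : list letter) : nat := length w.

Definition generates : Prop := forall g : Gr, exists w, is_word w /\ eval w = g.

Definition has_word_of_length (g : Gr) (n : nat) : Prop :=
  exists w, is_word w /\ length w = n /\ eval w = g.
Definition glen (g : Gr) : nat :=
  epsilon (inhabits 0%nat)
    (fun n => has_word_of_length g n /\ forall m, has_word_of_length g m -> (n <= m)%nat).
Definition vdist (g h : Gr) : R := INR (glen (ginv Gr g * h)).

(** Points of the geometric realization of Γ(G,X): vertices, and points on the
    edge from g to g*lval a at distance t ∈ [0,1] from g.  The edge (g,a) is the
    same edge as (g*lval a, lflip a) traversed backwards. *)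
Inductive point := PV (g : Gr) | PE (g : Gr) (a : letter) (t : R).

Definition valid_point (p : point) : Prop :=
  match p with PV _ => True | PE _ a t => valid_letter a /\ 0 <= t <= 1 end.

Definition pends (p : point) : list (Gr * R) :=
  match p with PV g => [(g, 0)] | PE g a t => [(g, t); (g * lval a, 1 - t)] end.

Definition end_cands (p q : point) : list R :=
  flat_map (fun e1 => map (fun e2 => snd e1 + vdist (fst e1) (fst e2) + snd e2) (pends q))
           (pends p).

Definition edge_cands (p q : point) : list R :=
  match p, q with
  | PE g a t, PE h b u =>
      (if excluded_middle_informative (h = g /\ b = a) then [Rabs (t - u)] else [])
      ++ (if excluded_middle_informative (h = g * lval a /\ b = lflip a)
          then [Rabs (1 - t - u)] else [])
  | _, _ => []
  end.

(** The path metric of Γ(G,X) (edges of length 1). *)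
Definition dist (p q : point) : R :=
  match end_cands p q ++ edge_cands p q with
  | [] => 0
  | x :: l => fold_right Rmin x l
  end.

Definition is_geodesic (gamma : R -> point) (L : R) (P Q : point) : Prop :=
  0 <= L /\
  (forall s, 0 <= s <= L -> valid_point (gamma s)) /\
  dist (gamma 0) P = 0 /\ dist (gamma L) Q = 0 /\
  (forall s t, 0 <= s <= L -> 0 <= t <= L -> dist (gamma s) (gamma t) = Rabs (s - t)).

Definition side_near (d : R) (gamma : R -> point) (L : R)
    (gamma' : R -> point) (L' : R) (gamma'' : R -> point) (L'' : R) : Prop :=
  forall s, 0 <= s <= L ->
    (exists t, 0 <= t <= L' /\ dist (gamma s) (gamma' t) <= d) \/
    (exists t, 0 <= t <= L'' /\ dist (gamma s) (gamma'' t) <= d).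

Definition hyperbolic (d : R) : Prop :=
  forall (A B C : point) (g1 g2 g3 : R -> point) (L1 L2 L3 : R),
    valid_point A -> valid_point B -> valid_point C ->
    is_geodesic g1 L1 A B -> is_geodesic g2 L2 B C -> is_geodesic g3 L3 C A ->
    side_near d g1 L1 g2 L2 g3 L3 /\
    side_near d g2 L2 g3 L3 g1 L1 /\
    side_near d g3 L3 g1 L1 g2 L2.

Definition cyclically_minimal (V : list letter) : Prop :=
  forall (g : Gr) (W : list letter), is_word W ->
    eval W = g * (eval V * ginv Gr g) -> (length V <= length W)%nat.

Definition pvert (g : Gr) (W : list letter) (i : nat) : Gr := g * eval (firstn i W).
Definition path_pt (g : Gr) (W : list letter) (s : R) : point :=
  let i := Z.to_nat (Int_part s) in
  match nth_error W i with
  | Some a => PE (pvert g W i) a (s - INR i)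
  | None => PV (pvert g W (length W))
  end.

Definition quasi_geodesic (lam c : R) (W : list letter) : Prop :=
  forall (g : Gr) (s t : R),
    0 <= s <= INR (length W) -> 0 <= t <= INR (length W) ->
    Rabs (s - t) <= lam * dist (path_pt g W s) (path_pt g W t) + c.

End Cayley.

Definition winv (w : list letter) : list letter := rev (map lflip w).
Definition wpown (w : list letter) (n : nat) : list letter := concat (repeat w n).
Definition wpowZ (w : list letter) (k : Z) : list letter :=
  if Z.leb 0 k then wpown w (Z.to_nat k) else wpown (winv w) (Z.to_nat (- k)).

(* Slimness of geodesic triangles with vertices in the Cayley graph yields the
   four-point condition for the word metric with constant 6 delta + 2.  Walking
   in steps of 16 delta along a path whose subpaths of length at most 32 delta are
   geodesic, the four-point condition forces the distance from the starting point
   to grow by at least 10 delta - 2 per step, so such a path is a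
   (2, 48 delta)-quasi-geodesic.  Cyclic minimality of V makes every subword of
   length at most |V| of a power of V geodesic, being a prefix of a cyclic
   permutation of V, and |V| >= 180 delta >= 32 delta.  Negative powers of V are
   positive powers of its formal inverse, which is again cyclically minimal.
   The bound obtained is much sharper than the (4, 2520 delta) claimed. *)

From Pilot Require Import Defs.
From Stdlib Require Import Reals ZArith List.
Open Scope R_scope.
From Stdlib Require Import Lra Lia ClassicalEpsilon.
Import ListNotations.
Local Open Scope nat_scope.

Section GroupTheory.
Context {Gr : group}.
Local Notation "x ** y" := (gmul Gr x y) (at level 40, left associativity).
Local Notation one := (gone Gr).
Local Notation inv := (ginv Gr).

Lemma mul1g x : one ** x = x. Proof. apply gone_l. Qed.
Lemma mulVg x : inv x ** x = one. Proof. apply ginv_l. Qed.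
Lemma mulgA x y z : x ** (y ** z) = (x ** y) ** z. Proof. apply gassoc. Qed.

Lemma mulgI x y z : x ** y = x ** z -> y = z.
Proof. intros E. now rewrite <- (mul1g y), <- (mul1g z), <- (mulVg x), <- !mulgA, E. Qed.

Lemma mulgV x : x ** inv x = one.
Proof.
  rewrite <- (mul1g (x ** inv x)), <- (mulVg (inv x)), <- mulgA.
  now rewrite (mulgA (inv x) x), mulVg, mul1g.
Qed.

Lemma mulg1 x : x ** one = x.
Proof. now rewrite <- (mulVg x), mulgA, mulgV, mul1g. Qed.

Lemma invMg x y : inv (x ** y) = inv y ** inv x.
Proof.
  apply (mulgI (x ** y)).
  now rewrite mulgV, mulgA, <- (mulgA x y), mulgV, mulg1, mulgV.
Qed.

Lemma invgK x : inv (inv x) = x.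
Proof. apply (mulgI (inv x)). now rewrite mulgV, mulVg. Qed.

Lemma invg1 : inv one = one.
Proof. rewrite <- (mul1g (inv one)). apply mulgV. Qed.

End GroupTheory.

Lemma exists_boundary_index (P : nat -> Prop) n : P 0 ->
  exists i, P i /\ (i = n \/ (i < n /\ ~ P (S i))).
Proof.
  intros P0. induction n as [|n IH].
  - exists 0. auto.
  - destruct IH as [i [Pi [->|[Hlt NP]]]].
    + destruct (classic (P (S n))) as [H|H].
      * exists (S n). auto.
      * exists n. split; [exact Pi | right; auto].
    + exists i. split; [exact Pi | right; split; [lia | exact NP]].
Qed.

Lemma length_wpown V n : length (wpown V n) = n * length V.
Proof.
  induction n as [|n IH]; [reflexivity|].
  unfold wpown in *. simpl. rewrite length_app, IH. lia.
Qed.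

Lemma nth_wpown V n k dl : 0 < length V -> k < n * length V ->
  nth k (wpown V n) dl = nth (k mod length V) V dl.
Proof.
  intros HL. revert k. induction n as [|n IH]; intros k Hk; [simpl in Hk; lia|].
  unfold wpown. simpl. destruct (Nat.lt_ge_cases k (length V)) as [H|H].
  - rewrite app_nth1, Nat.mod_small by exact H. reflexivity.
  - rewrite app_nth2 by exact H. fold (wpown V n). rewrite IH by (simpl in Hk; lia).
    f_equal. replace k with ((k - length V) + 1 * length V) at 2 by lia.
    now rewrite Nat.Div0.mod_add.
Qed.

Definition rot {A : Type} (r : nat) (V : list A) : list A := skipn r V ++ firstn r V.

Lemma length_rot {A : Type} r (V : list A) : r <= length V -> length (rot r V) = length V.
Proof. intros. unfold rot. rewrite length_app, length_skipn, length_firstn. lia. Qed.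

Lemma nth_rot {A : Type} r (V : list A) k dl : r < length V -> k < length V ->
  nth k (rot r V) dl = nth ((r + k) mod length V) V dl.
Proof.
  intros Hr Hk. unfold rot. set (L := length V) in *.
  destruct (Nat.lt_ge_cases (r + k) L) as [H|H].
  - rewrite app_nth1 by (rewrite length_skipn; lia).
    now rewrite nth_skipn, Nat.mod_small.
  - rewrite app_nth2 by (rewrite length_skipn; lia).
    rewrite nth_firstn, length_skipn. fold L.
    replace (k - (L - r) <? r) with true by (symmetry; apply Nat.ltb_lt; lia).
    f_equal. apply (Nat.mod_unique _ _ 1); lia.
Qed.

Section Words.
Context {Gr : group} {X : list Gr}.
Local Notation "x ** y" := (gmul Gr x y) (at level 40, left associativity).
Local Notation inv := (ginv Gr).
Local Notation ev := (eval Gr X).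
Local Notation word := (is_word Gr X).

Lemma eval_app u v : ev (u ++ v) = ev u ** ev v.
Proof.
  induction u as [|a u IH]; simpl.
  - now rewrite mul1g.
  - now rewrite IH, mulgA.
Qed.

Lemma lval_lflip a : lval Gr X (lflip a) = inv (lval Gr X a).
Proof. destruct a as [i []]; unfold lval, lflip; simpl; now rewrite ?invgK. Qed.

Lemma eval_winv w : ev (winv w) = inv (ev w).
Proof.
  induction w as [|a w IH]; simpl.
  - now rewrite invg1.
  - unfold winv in *. simpl.
    rewrite eval_app, IH, invMg. simpl. now rewrite mulg1, lval_lflip.
Qed.

Lemma length_winv w : length (winv w) = length w.
Proof. unfold winv. now rewrite length_rev, length_map. Qed.

Lemma is_word_app u v : word u -> word v -> word (u ++ v).
Proof. intros; now apply Forall_app. Qed.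

Lemma is_word_winv w : word w -> word (winv w).
Proof.
  intros H. apply Forall_rev, Forall_map.
  eapply Forall_impl; [|exact H]. now intros a.
Qed.

Lemma is_word_firstn n w : word w -> word (firstn n w).
Proof. intros H. rewrite <- (firstn_skipn n w) in H. now apply Forall_app in H. Qed.

Lemma is_word_skipn n w : word w -> word (skipn n w).
Proof. intros H. rewrite <- (firstn_skipn n w) in H. now apply Forall_app in H. Qed.

Lemma valid_letter_nth_error w i a :
  word w -> nth_error w i = Some a -> valid_letter Gr X a.
Proof. intros H E. apply nth_error_In in E. now apply (proj1 (Forall_forall _ _) H). Qed.

Lemma is_word_wpown V n : word V -> word (wpown V n).
Proof.
  intros HV. induction n as [|n IH]; [constructor|].
  unfold wpown in *. simpl. now apply is_word_app.
Qed.

Lemma is_word_rot r V : word V -> word (rot r V).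
Proof. intros. apply is_word_app; [apply is_word_skipn | apply is_word_firstn]; assumption. Qed.

Lemma eval_rot r V : ev (rot r V) = inv (ev (firstn r V)) ** (ev V ** ev (firstn r V)).
Proof.
  assert (EV : ev V = ev (firstn r V) ** ev (skipn r V))
    by now rewrite <- eval_app, firstn_skipn.
  unfold rot. now rewrite eval_app, EV, !mulgA, mulVg, mul1g.
Qed.

Lemma cyclically_minimal_winv V :
  cyclically_minimal Gr X V -> cyclically_minimal Gr X (winv V).
Proof.
  intros CM g W HW E. rewrite length_winv, <- (length_winv W).
  apply (CM g); [now apply is_word_winv|].
  rewrite eval_winv, E, eval_winv, !invMg, !invgK. symmetry. apply mulgA.
Qed.
End Words.

Section WordMetric.
Variable Gr : group.
Variable X : list Gr.
Hypothesis gen : generates Gr X.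
Local Notation "x ** y" := (gmul Gr x y) (at level 40, left associativity).
Local Notation one := (gone Gr).
Local Notation inv := (ginv Gr).
Local Notation ev := (eval Gr X).
Local Notation word := (is_word Gr X).
Local Notation glen := (glen Gr X).
Local Notation pv := (pvert Gr X).

Lemma glen_spec g : has_word_of_length Gr X g (glen g) /\
  forall m, has_word_of_length Gr X g m -> glen g <= m.
Proof.
  unfold Defs.glen. apply epsilon_spec.
  destruct (gen g) as [w [Hw Ew]].
  destruct (dec_inh_nat_subset_has_unique_least_element (has_word_of_length Gr X g))
    as [n [Hn _]].
  - intros n. apply classic.
  - exists (length w), w. auto.
  - now exists n.
Qed.

Lemma glen_le g w : word w -> ev w = g -> glen g <= length w.
Proof. intros. apply glen_spec. now exists w. Qed.

Lemma exists_word_glen g : exists w, word w /\ length w = glen g /\ ev w = g.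
Proof. apply glen_spec. Qed.

Definition wdist (u v : Gr) : nat := glen (inv u ** v).

Lemma wdist_refl u : wdist u u = 0.
Proof.
  unfold wdist. rewrite mulVg.
  assert (H := glen_le one [] (Forall_nil _) eq_refl). simpl in H. lia.
Qed.

Lemma wdist_sym u v : wdist u v = wdist v u.
Proof.
  assert (Hle : forall u v, wdist u v <= wdist v u).
  { intros a b. unfold wdist.
    destruct (exists_word_glen (inv b ** a)) as [w [Hw [Lw Ew]]].
    rewrite <- Lw, <- length_winv. apply glen_le.
    - now apply is_word_winv.
    - now rewrite eval_winv, Ew, invMg, invgK. }
  apply Nat.le_antisymm; apply Hle.
Qed.

Lemma wdist_triangle u v w : wdist u w <= wdist u v + wdist v w.
Proof.
  unfold wdist.
  destruct (exists_word_glen (inv u ** v)) as [w1 [H1 [L1 E1]]].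
  destruct (exists_word_glen (inv v ** w)) as [w2 [H2 [L2 E2]]].
  rewrite <- L1, <- L2, <- length_app. apply glen_le.
  - now apply is_word_app.
  - now rewrite eval_app, E1, E2, <- mulgA, (mulgA v), mulgV, mul1g.
Qed.

Lemma wdist_eval_le u w : word w -> wdist u (u ** ev w) <= length w.
Proof. intros. apply glen_le; auto. now rewrite mulgA, mulVg, mul1g. Qed.

Lemma pvert_0 g W : pv g W 0 = g.
Proof. apply mulg1. Qed.

Lemma pvert_length g W : pv g W (length W) = g ** ev W.
Proof. unfold pvert. now rewrite firstn_all. Qed.

Lemma pvert_split g W i j : i <= j ->
  pv g W j = pv g W i ** ev (firstn (j - i) (skipn i W)).
Proof.
  intros Hij. unfold pvert. rewrite <- mulgA, <- eval_app.
  do 2 f_equal. rewrite <- (firstn_skipn i W) at 1.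
  rewrite firstn_app, firstn_firstn, Nat.min_r by exact Hij.
  destruct (Nat.le_ge_cases i (length W)).
  - now rewrite length_firstn, Nat.min_l.
  - now rewrite skipn_all2, !firstn_nil.
Qed.

Lemma pvert_S g W i a : nth_error W i = Some a -> pv g W (S i) = pv g W i ** lval Gr X a.
Proof.
  intros Ha. rewrite (pvert_split g W i (S i)) by lia.
  replace (S i - i) with 1 by lia.
  rewrite <- hd_error_skipn in Ha.
  destruct (skipn i W) as [|b r]; [discriminate|].
  injection Ha as ->. simpl. now rewrite mulg1.
Qed.

Lemma wdist_pvert_le g W i j : word W -> i <= j -> wdist (pv g W i) (pv g W j) <= j - i.
Proof.
  intros HW Hij. rewrite (pvert_split g W i j Hij).
  eapply Nat.le_trans.
  - apply wdist_eval_le, is_word_firstn, is_word_skipn, HW.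
  - rewrite length_firstn. lia.
Qed.

Definition geodesic_word (u v : Gr) (W : list letter) : Prop :=
  word W /\ ev W = inv u ** v /\ length W = wdist u v.

Definition between (u q v : Gr) : Prop := wdist u q + wdist q v = wdist u v.

Lemma exists_geodesic_word u v : exists W, geodesic_word u v W.
Proof.
  destruct (exists_word_glen (inv u ** v)) as [W [HW [LW EW]]].
  now exists W.
Qed.

Lemma pvert_geodesic_end u v W : geodesic_word u v W -> pv u W (length W) = v.
Proof. intros [_ [EW _]]. now rewrite pvert_length, EW, mulgA, mulgV, mul1g. Qed.

Lemma wdist_pvert_geodesic u v W i j : geodesic_word u v W ->
  i <= j -> j <= length W -> wdist (pv u W i) (pv u W j) = j - i.
Proof.
  intros G Hij Hj. assert (HW : word W) by apply G.
  assert (Hin := wdist_pvert_le u W i j HW Hij).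
  assert (Hpre := wdist_pvert_le u W 0 i HW ltac:(lia)).
  assert (Hpost := wdist_pvert_le u W j (length W) HW Hj).
  rewrite pvert_0 in Hpre. rewrite (pvert_geodesic_end u v W G) in Hpost.
  assert (T1 := wdist_triangle u (pv u W i) v).
  assert (T2 := wdist_triangle (pv u W i) (pv u W j) v).
  destruct G as [_ [_ LW]]. lia.
Qed.

Lemma wdist_pvert_geodesic_Rabs u v W i j : geodesic_word u v W ->
  i <= length W -> j <= length W ->
  INR (wdist (pv u W i) (pv u W j)) = Rabs (INR i - INR j).
Proof.
  intros G Hi Hj. destruct (Nat.le_ge_cases i j) as [Hij|Hji].
  - rewrite (wdist_pvert_geodesic u v W i j G Hij Hj), minus_INR by exact Hij.
    rewrite Rabs_minus_sym, Rabs_right; [reflexivity|].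
    apply Rge_minus, Rle_ge, le_INR, Hij.
  - rewrite wdist_sym, (wdist_pvert_geodesic u v W j i G Hji Hi), minus_INR by exact Hji.
    rewrite Rabs_right; [reflexivity|].
    apply Rge_minus, Rle_ge, le_INR, Hji.
Qed.

Lemma pvert_geodesic_inj u v W i j : geodesic_word u v W ->
  i <= length W -> j <= length W -> pv u W i = pv u W j -> i = j.
Proof.
  intros G Hi Hj E. destruct (Nat.le_ge_cases i j) as [Hij|Hji].
  - assert (H := wdist_pvert_geodesic u v W i j G Hij Hj).
    rewrite E, wdist_refl in H. lia.
  - assert (H := wdist_pvert_geodesic u v W j i G Hji Hi).
    rewrite E, wdist_refl in H. lia.
Qed.

Lemma between_pvert_geodesic u v W i : geodesic_word u v W -> i <= length W ->
  between u (pv u W i) v.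
Proof.
  intros G Hi. unfold between.
  assert (Hpre := wdist_pvert_geodesic u v W 0 i G (Nat.le_0_l i) Hi).
  assert (Hpost := wdist_pvert_geodesic u v W i (length W) G Hi (Nat.le_refl _)).
  rewrite pvert_0 in Hpre. rewrite (pvert_geodesic_end u v W G) in Hpost.
  destruct G as [_ [_ LW]]. lia.
Qed.

Lemma glen_prefix_rot V r l : word V -> cyclically_minimal Gr X V ->
  r < length V -> l <= length V -> glen (ev (firstn l (rot r V))) = l.
Proof.
  intros HV CM Hr Hl. apply Nat.le_antisymm.
  - eapply Nat.le_trans; [apply glen_le; [apply is_word_firstn, is_word_rot, HV | reflexivity]|].
    rewrite length_firstn. lia.
  - (* A shorter word for this prefix would yield a shorter conjugate of V. *)
    destruct (exists_word_glen (ev (firstn l (rot r V)))) as [Ws [HWs [LWs EWs]]].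
    assert (Hconj : ev (Ws ++ skipn l (rot r V)) =
                    inv (ev (firstn r V)) ** (ev V ** inv (inv (ev (firstn r V))))).
    { now rewrite eval_app, EWs, <- eval_app, firstn_skipn, eval_rot, invgK. }
    assert (H := CM _ _ (is_word_app _ _ HWs (is_word_skipn _ _ (is_word_rot r V HV))) Hconj).
    rewrite length_app, length_skipn, length_rot in H by lia. lia.
Qed.

Lemma wdist_pvert_wpown V n g a b : word V -> cyclically_minimal Gr X V -> 0 < length V ->
  a <= b -> b <= n * length V -> b - a <= length V ->
  wdist (pv g (wpown V n) a) (pv g (wpown V n) b) = b - a.
Proof.
  intros HV CM HL Hab Hb Hba. set (U := wpown V n). set (L := length V) in *.
  assert (LU : length U = n * L) by apply length_wpown.
  rewrite (pvert_split g U a b Hab). unfold wdist. rewrite mulgA, mulVg, mul1g.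
  assert (Hr : a mod L < L) by (apply Nat.mod_upper_bound; lia).
  assert (Hinfix : firstn (b - a) (skipn a U) = firstn (b - a) (rot (a mod L) V)).
  { apply nth_ext with (d := (0, true)) (d' := (0, true)).
    - rewrite !length_firstn, length_skipn, length_rot; lia.
    - intros k Hk. rewrite length_firstn, length_skipn in Hk.
      rewrite !nth_firstn. replace (k <? b - a) with true by (symmetry; apply Nat.ltb_lt; lia).
      rewrite nth_skipn. unfold U. rewrite nth_wpown, nth_rot by lia. fold L. f_equal.
      rewrite (Nat.div_mod_eq a L) at 1.
      now rewrite <- Nat.add_assoc, Nat.add_comm, Nat.mul_comm, Nat.Div0.mod_add. }
  rewrite Hinfix. now apply glen_prefix_rot.
Qed.

Definition ifloor (s : R) : nat := Z.to_nat (Int_part s).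

Lemma ifloor_spec s : (0 <= s)%R -> (INR (ifloor s) <= s < INR (ifloor s) + 1)%R.
Proof.
  intros Hs. destruct (base_Int_part s) as [H1 H2].
  assert (Hz : (0 <= Int_part s)%Z).
  { apply Z.lt_succ_r, lt_IZR. rewrite succ_IZR. lra. }
  unfold ifloor. rewrite INR_IZR_INZ, Z2Nat.id by exact Hz. lra.
Qed.

Lemma ifloor_INR n : ifloor (INR n) = n.
Proof.
  destruct (ifloor_spec (INR n) (pos_INR n)) as [H1 H2].
  apply INR_le in H1. rewrite <- S_INR in H2. apply INR_lt in H2. lia.
Qed.

Lemma path_pt_cases g W s : (0 <= s <= INR (length W))%R ->
  (ifloor s < length W /\ exists a, nth_error W (ifloor s) = Some a /\
     path_pt Gr X g W s = PE Gr (pv g W (ifloor s)) a (s - INR (ifloor s)))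
  \/ (ifloor s = length W /\ s = INR (length W) /\
     path_pt Gr X g W s = PV Gr (pv g W (length W))).
Proof.
  intros Hs. destruct (ifloor_spec s ltac:(lra)) as [H1 H2].
  unfold path_pt. fold (ifloor s). destruct (nth_error W (ifloor s)) eqn:E.
  - left. split; [apply nth_error_Some; congruence | eauto].
  - right. apply nth_error_None in E.
    assert (ifloor s <= length W) by (apply INR_le; lra).
    assert (Hl : ifloor s = length W) by lia.
    rewrite Hl in H1. repeat split; auto. lra.
Qed.

Lemma In_pends_path_pt g W s e : (0 <= s <= INR (length W))%R ->
  In e (pends Gr X (path_pt Gr X g W s)) ->
  exists k, (k = ifloor s \/ k = S (ifloor s)) /\ k <= length W /\
    fst e = pv g W k /\ snd e = Rabs (s - INR k).
Proof.
  intros Hs. destruct (ifloor_spec s ltac:(lra)) as [H1 H2].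
  destruct (path_pt_cases g W s Hs) as [[Hl [a [Ea ->]]]|[Hl [Es ->]]];
    simpl; intros He.
  - destruct He as [<-|[<-|[]]]; simpl.
    + exists (ifloor s). rewrite Rabs_right by lra. repeat split; auto; lia.
    + exists (S (ifloor s)). rewrite (pvert_S g W _ a Ea), S_INR, Rabs_left1 by lra.
      repeat split; auto; try lia. f_equal. ring.
  - destruct He as [<-|[]]; simpl.
    exists (ifloor s). rewrite Hl, <- Es, Rminus_diag, Rabs_R0. auto.
Qed.

Lemma In_pends_path_pt_floor g W s : (0 <= s <= INR (length W))%R ->
  In (pv g W (ifloor s), s - INR (ifloor s))%R (pends Gr X (path_pt Gr X g W s)).
Proof.
  intros Hs. destruct (path_pt_cases g W s Hs) as [[_ [a [_ ->]]]|[Hl [Es ->]]]; simpl.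
  - now left.
  - left. now rewrite Hl, <- Es, Rminus_diag.
Qed.

Lemma In_pends_path_pt_ceil g W s : (0 <= s <= INR (length W))%R ->
  ifloor s < length W ->
  In (pv g W (S (ifloor s)), INR (S (ifloor s)) - s)%R (pends Gr X (path_pt Gr X g W s)).
Proof.
  intros Hs Hlt. destruct (path_pt_cases g W s Hs) as [[_ [a [Ea ->]]]|[Hl _]]; [|lia].
  cbn [pends]. right; left. rewrite (pvert_S g W _ a Ea), S_INR. f_equal. ring.
Qed.

Lemma valid_path_pt g W s : word W -> (0 <= s <= INR (length W))%R ->
  valid_point Gr X (path_pt Gr X g W s).
Proof.
  intros HW Hs. destruct (ifloor_spec s ltac:(lra)).
  destruct (path_pt_cases g W s Hs) as [[_ [a [Ea ->]]]|[_ [_ ->]]]; simpl; auto.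
  split; [exact (valid_letter_nth_error W _ a HW Ea) | lra].
Qed.

Lemma fold_right_Rmin_In x l : In (fold_right Rmin x l) (x :: l).
Proof.
  induction l as [|y l IH]; simpl; [now left|].
  destruct (Rle_dec y (fold_right Rmin x l)).
  - rewrite Rmin_left by lra. now right; left.
  - rewrite Rmin_right by lra. destruct IH as [E|E]; [now left | now right; right].
Qed.

Lemma fold_right_Rmin_le x l c : In c (x :: l) -> (fold_right Rmin x l <= c)%R.
Proof.
  induction l as [|y l IH]; intros Hc; simpl.
  - destruct Hc as [<-|[]]. lra.
  - destruct Hc as [<-|[<-|Hc]].
    + eapply Rle_trans; [apply Rmin_r | apply IH; now left].
    + apply Rmin_l.
    + eapply Rle_trans; [apply Rmin_r | apply IH; now right].
Qed.

Local Notation pdist := (Defs.dist Gr X).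
Local Notation cands p q := (end_cands Gr X p q ++ edge_cands Gr X p q).

Lemma dist_In_cands p q : In (pdist p q) (cands p q).
Proof.
  unfold Defs.dist. destruct (cands p q) as [|c l] eqn:E.
  - apply app_eq_nil in E. destruct p, q; discriminate (proj1 E).
  - apply fold_right_Rmin_In.
Qed.

Lemma dist_le_cand p q c : In c (cands p q) -> (pdist p q <= c)%R.
Proof.
  unfold Defs.dist. destruct (cands p q); [intros []|]. apply fold_right_Rmin_le.
Qed.

Lemma dist_le_ends p q e1 e2 : In e1 (pends Gr X p) -> In e2 (pends Gr X q) ->
  (pdist p q <= snd e1 + INR (wdist (fst e1) (fst e2)) + snd e2)%R.
Proof.
  intros H1 H2. apply dist_le_cand, in_or_app. left.
  apply in_flat_map. exists e1. split; [exact H1|]. apply in_map_iff. now exists e2.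
Qed.

Lemma dist_cases p q :
  (exists e1 e2, In e1 (pends Gr X p) /\ In e2 (pends Gr X q) /\
     pdist p q = (snd e1 + INR (wdist (fst e1) (fst e2)) + snd e2)%R) \/
  (exists g a t u, p = PE Gr g a t /\ q = PE Gr g a u /\ pdist p q = Rabs (t - u)) \/
  (exists g a t u, p = PE Gr g a t /\ q = PE Gr (g ** lval Gr X a) (lflip a) u /\
     pdist p q = Rabs (1 - t - u)).
Proof.
  assert (Hin := dist_In_cands p q). apply in_app_or in Hin. destruct Hin as [Hin|Hin].
  - left. apply in_flat_map in Hin. destruct Hin as [e1 [H1 H2]].
    apply in_map_iff in H2. destruct H2 as [e2 [E H2]]. now exists e1, e2.
  - right. destruct p as [g|g a t]; destruct q as [h|h b u]; try contradiction.
    apply in_app_or in Hin. destruct Hin as [Hin|Hin];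
      destruct (excluded_middle_informative _) as [[-> ->]|_];
      try contradiction; destruct Hin as [E|[]].
    + left. now exists g, a, t, u.
    + right. now exists g, a, t, u.
Qed.

Lemma dist_nonneg p q : valid_point Gr X p -> valid_point Gr X q -> (0 <= pdist p q)%R.
Proof.
  intros Hp Hq.
  assert (Hends : forall r e, valid_point Gr X r -> In e (pends Gr X r) -> (0 <= snd e)%R).
  { intros [g|g a t] e Hr He; simpl in He;
      [destruct He as [<-|[]] | destruct He as [<-|[<-|[]]]]; simpl in *; lra. }
  destruct (dist_cases p q) as [[e1 [e2 [H1 [H2 ->]]]]|[[g [a [t [u [_ [_ ->]]]]]]|
                                 [g [a [t [u [_ [_ ->]]]]]]]].
  - assert (0 <= INR (wdist (fst e1) (fst e2)))%R by apply pos_INR.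
    assert (Hend1 := Hends p e1 Hp H1). assert (Hend2 := Hends q e2 Hq H2). lra.
  - apply Rabs_pos.
  - apply Rabs_pos.
Qed.

Lemma dist_PV g h : pdist (PV Gr g) (PV Gr h) = INR (wdist g h).
Proof. unfold Defs.dist, end_cands, vdist. simpl. fold (wdist g h). ring. Qed.

Lemma path_dist_le_apart g W s t : word W ->
  (0 <= s <= INR (length W))%R -> (0 <= t <= INR (length W))%R ->
  ifloor s < ifloor t ->
  (pdist (path_pt Gr X g W s) (path_pt Gr X g W t) <= t - s)%R /\
  (pdist (path_pt Gr X g W t) (path_pt Gr X g W s) <= t - s)%R.
Proof.
  intros HW Hs Ht Hlt.
  destruct (ifloor_spec s ltac:(lra)) as [Hs1 Hs2].
  destruct (ifloor_spec t ltac:(lra)) as [Ht1 Ht2].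
  assert (Hsl : ifloor s < length W).
  { apply Nat.lt_le_trans with (ifloor t); [exact Hlt|]. apply INR_le. lra. }
  assert (Hmid := wdist_pvert_le g W (S (ifloor s)) (ifloor t) HW Hlt).
  apply le_INR in Hmid. rewrite minus_INR, S_INR in Hmid by exact Hlt.
  assert (Eceil := In_pends_path_pt_ceil g W s Hs Hsl).
  assert (Efloor := In_pends_path_pt_floor g W t Ht).
  split.
  - eapply Rle_trans; [exact (dist_le_ends _ _ _ _ Eceil Efloor)|]. cbn [fst snd].
    rewrite S_INR. lra.
  - eapply Rle_trans; [exact (dist_le_ends _ _ _ _ Efloor Eceil)|]. cbn [fst snd].
    rewrite wdist_sym, S_INR. lra.
Qed.

Lemma path_dist_le g W s t : word W ->
  (0 <= s <= INR (length W))%R -> (0 <= t <= INR (length W))%R ->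
  (pdist (path_pt Gr X g W s) (path_pt Gr X g W t) <= Rabs (s - t))%R.
Proof.
  intros HW Hs Ht. destruct (lt_eq_lt_dec (ifloor s) (ifloor t)) as [[Hlt|Heq]|Hgt].
  - rewrite Rabs_minus_sym, Rabs_right; [apply path_dist_le_apart; auto|].
    destruct (ifloor_spec s ltac:(lra)), (ifloor_spec t ltac:(lra)).
    apply le_INR in Hlt. rewrite S_INR in Hlt. lra.
  - destruct (ifloor_spec t ltac:(lra)) as [Ht1 _].
    destruct (path_pt_cases g W s Hs) as [[Hsl [a [Ea Ep]]]|[Hsl [Es Ep]]].
    + destruct (path_pt_cases g W t Ht) as [[_ [b [Eb ->]]]|[Htl _]]; [|lia].
      rewrite Ep, <- Heq. rewrite <- Heq, Ea in Eb. injection Eb as <-.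
      apply dist_le_cand, in_or_app. right. simpl.
      destruct (excluded_middle_informative _) as [_|NE]; [|tauto].
      left. f_equal. ring.
    + assert (Et : t = s) by (rewrite <- Heq, Hsl in Ht1; lra). subst t.
      eapply Rle_trans; [apply (dist_le_ends _ _ _ _ (In_pends_path_pt_floor g W s Hs)
                                             (In_pends_path_pt_floor g W s Hs))|].
      cbn [fst snd]. rewrite wdist_refl, Hsl, <- Es, Rminus_diag, Rabs_R0. simpl. lra.
  - rewrite Rabs_right; [apply path_dist_le_apart; auto|].
    destruct (ifloor_spec s ltac:(lra)), (ifloor_spec t ltac:(lra)).
    apply le_INR in Hgt. rewrite S_INR in Hgt. lra.
Qed.

Lemma path_pt_PE g W s h a r : (0 <= s <= INR (length W))%R ->
  path_pt Gr X g W s = PE Gr h a r ->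
  ifloor s < length W /\ nth_error W (ifloor s) = Some a /\
  h = pv g W (ifloor s) /\ r = (s - INR (ifloor s))%R.
Proof.
  intros Hs E.
  destruct (path_pt_cases g W s Hs) as [[Hl [b [Eb Ep]]]|[_ [_ Ep]]];
    rewrite Ep in E; [|discriminate].
  injection E as -> -> ->. auto.
Qed.

Lemma path_dist_geodesic_ge u v W s t : geodesic_word u v W ->
  (0 <= s <= INR (length W))%R -> (0 <= t <= INR (length W))%R ->
  (Rabs (s - t) <= pdist (path_pt Gr X u W s) (path_pt Gr X u W t))%R.
Proof.
  intros G Hs Ht.
  destruct (dist_cases (path_pt Gr X u W s) (path_pt Gr X u W t)) as
    [[e1 [e2 [H1 [H2 ->]]]]|[[g [a [r1 [r2 [Ep [Eq ->]]]]]]|[g [a [r1 [r2 [Ep [Eq _]]]]]]]].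
  - destruct (In_pends_path_pt u W s e1 Hs H1) as [k [_ [Hk [-> ->]]]].
    destruct (In_pends_path_pt u W t e2 Ht H2) as [l [_ [Hl [-> ->]]]].
    rewrite (wdist_pvert_geodesic_Rabs u v W k l G Hk Hl).
    unfold Rabs. (repeat destruct (Rcase_abs _)); lra.
  - destruct (path_pt_PE u W s _ _ _ Hs Ep) as [Hsl [_ [Eg ->]]].
    destruct (path_pt_PE u W t _ _ _ Ht Eq) as [Htl [_ [Eg' ->]]].
    rewrite Eg in Eg'. apply (pvert_geodesic_inj u v W _ _ G) in Eg'; try lia.
    rewrite Eg'. right. f_equal. ring.
  - exfalso.
    destruct (path_pt_PE u W s _ _ _ Hs Ep) as [Hsl [Ea [Eg _]]].
    destruct (path_pt_PE u W t _ _ _ Ht Eq) as [Htl [Eb [Eg' _]]].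
    rewrite Eg, <- (pvert_S u W _ a Ea) in Eg'.
    assert (Eback : pv u W (S (ifloor t)) = pv u W (ifloor s)).
    { rewrite (pvert_S u W _ _ Eb), <- Eg', (pvert_S u W _ a Ea), lval_lflip.
      now rewrite <- mulgA, mulgV, mulg1. }
    apply (pvert_geodesic_inj u v W _ _ G) in Eg'; try lia.
    apply (pvert_geodesic_inj u v W _ _ G) in Eback; lia.
Qed.

Lemma path_pt_geodesic u v W : geodesic_word u v W ->
  is_geodesic Gr X (path_pt Gr X u W) (INR (length W)) (PV Gr u) (PV Gr v).
Proof.
  intros G. assert (HW : word W) by apply G. assert (HL := pos_INR (length W)).
  assert (H0 : (0 <= 0 <= INR (length W))%R) by lra.
  assert (HLW : (0 <= INR (length W) <= INR (length W))%R) by lra.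
  repeat split.
  - exact HL.
  - intros s Hs. now apply valid_path_pt.
  - apply Rle_antisym; [|apply dist_nonneg; [now apply valid_path_pt | exact I]].
    eapply Rle_trans; [apply (dist_le_ends _ (PV Gr u) _ (u, 0%R)
                               (In_pends_path_pt_floor u W 0 H0)); now left|].
    rewrite (ifloor_INR 0 : ifloor 0 = 0).
    cbn [fst snd]. rewrite pvert_0, wdist_refl. simpl. lra.
  - destruct (path_pt_cases u W _ HLW) as [[Hl _]|[_ [_ ->]]].
    + rewrite ifloor_INR in Hl. lia.
    + now rewrite (pvert_geodesic_end u v W G), dist_PV, wdist_refl.
  - intros s t Hs Ht. apply Rle_antisym.
    + now apply path_dist_le.
    + now apply (path_dist_geodesic_ge u v W).
Qed.

Lemma near_vertex g W h W2 s t : word W -> word W2 ->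
  (0 <= s <= INR (length W))%R -> (0 <= t <= INR (length W2))%R ->
  exists l, (l = ifloor t \/ l = S (ifloor t)) /\ l <= length W2 /\
    (INR (wdist (pv g W (ifloor s)) (pv h W2 l)) <=
       pdist (path_pt Gr X g W s) (path_pt Gr X h W2 t) + (s - INR (ifloor s)))%R.
Proof.
  intros HW HW2 Hs Ht. destruct (ifloor_spec s ltac:(lra)) as [Hs1 Hs2].
  destruct (dist_cases (path_pt Gr X g W s) (path_pt Gr X h W2 t)) as
    [[e1 [e2 [H1 [H2 ->]]]]|[[g' [a [r1 [r2 [Ep [Eq ->]]]]]]|
                             [g' [a [r1 [r2 [Ep [Eq ->]]]]]]]].
  - destruct (In_pends_path_pt g W s e1 Hs H1) as [k [Hk [_ [-> ->]]]].
    destruct (In_pends_path_pt h W2 t e2 Ht H2) as [l [Hl [Hl2 [-> ->]]]].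
    exists l. split; [exact Hl|]. split; [exact Hl2|]. cbn [fst snd].
    assert (Hfk : (INR (wdist (pv g W (ifloor s)) (pv g W k)) <=
                   Rabs (s - INR k) + (s - INR (ifloor s)))%R).
    { destruct Hk as [->| ->].
      - rewrite wdist_refl, Rabs_right by lra. simpl. lra.
      - assert (H := wdist_pvert_le g W (ifloor s) (S (ifloor s)) HW (Nat.le_succ_diag_r _)).
        apply le_INR in H. rewrite minus_INR, S_INR in H by lia.
        rewrite S_INR, Rabs_left1 by lra. lra. }
    assert (T := wdist_triangle (pv g W (ifloor s)) (pv g W k) (pv h W2 l)).
    apply le_INR in T. rewrite plus_INR in T.
    assert (0 <= Rabs (t - INR l))%R by apply Rabs_pos. lra.
  - destruct (path_pt_PE g W s _ _ _ Hs Ep) as [_ [_ [-> ->]]].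
    destruct (path_pt_PE h W2 t _ _ _ Ht Eq) as [Htl [_ [Eg _]]].
    exists (ifloor t). repeat split; [now left | lia |].
    rewrite <- Eg, wdist_refl. assert (0 <= Rabs (s - INR (ifloor s) - r2))%R by apply Rabs_pos.
    simpl. lra.
  - destruct (path_pt_PE g W s _ _ _ Hs Ep) as [_ [_ [-> ->]]].
    destruct (path_pt_PE h W2 t _ _ _ Ht Eq) as [Htl [Eb [Eg _]]].
    exists (S (ifloor t)). repeat split; [now right | lia |].
    rewrite (pvert_S h W2 _ _ Eb), <- Eg, lval_lflip, <- mulgA, mulgV, mulg1, wdist_refl.
    assert (0 <= Rabs (1 - (s - INR (ifloor s)) - r2))%R by apply Rabs_pos.
    simpl. lra.
Qed.

Lemma wdist_vertex_le_dist g W h W2 i t : word W -> word W2 ->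
  i <= length W -> (0 <= t <= INR (length W2))%R ->
  exists l, l <= length W2 /\
    (INR (wdist (pv g W i) (pv h W2 l)) <=
       pdist (path_pt Gr X g W (INR i)) (path_pt Gr X h W2 t))%R.
Proof.
  intros HW HW2 Hi Ht.
  assert (Hs : (0 <= INR i <= INR (length W))%R) by (split; [apply pos_INR | now apply le_INR]).
  destruct (near_vertex g W h W2 (INR i) t HW HW2 Hs Ht) as [l [_ [Hl Hd]]].
  rewrite ifloor_INR, Rminus_diag, Rplus_0_r in Hd. now exists l.
Qed.

Lemma wdist_floor_le_dist g W s t : word W ->
  (0 <= s <= INR (length W))%R -> (0 <= t <= INR (length W))%R ->
  (INR (wdist (pv g W (ifloor s)) (pv g W (ifloor t))) <=
     pdist (path_pt Gr X g W s) (path_pt Gr X g W t) + 2)%R.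
Proof.
  intros HW Hs Ht. destruct (ifloor_spec s ltac:(lra)) as [Hs1 Hs2].
  destruct (near_vertex g W g W s t HW HW Hs Ht) as [l [Hl [_ Hd]]].
  assert (Hlt : wdist (pv g W l) (pv g W (ifloor t)) <= 1).
  { destruct Hl as [->| ->].
    - rewrite wdist_refl. lia.
    - rewrite wdist_sym. eapply Nat.le_trans; [apply wdist_pvert_le; auto|]. lia. }
  assert (T := wdist_triangle (pv g W (ifloor s)) (pv g W l) (pv g W (ifloor t))).
  apply le_INR in T, Hlt. rewrite plus_INR in T. simpl in Hlt. lra.
Qed.

Section SlimTriangles.
Variable delta : nat.
Hypothesis hyp : hyperbolic Gr X (INR delta).

Lemma geodesic_vertex_near_sides A B C W i : geodesic_word A B W -> i <= length W ->
  exists q, wdist (pv A W i) q <= delta /\ (between B q C \/ between C q A).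
Proof.
  intros G Hi.
  destruct (exists_geodesic_word B C) as [W2 G2].
  destruct (exists_geodesic_word C A) as [W3 G3].
  destruct (hyp (PV Gr A) (PV Gr B) (PV Gr C) _ _ _ _ _ _ I I I
     (path_pt_geodesic A B W G) (path_pt_geodesic B C W2 G2) (path_pt_geodesic C A W3 G3))
    as [Hslim _].
  assert (Hs : (0 <= INR i <= INR (length W))%R) by (split; [apply pos_INR | now apply le_INR]).
  destruct (Hslim (INR i) Hs) as [[t [Ht Hd]]|[t [Ht Hd]]].
  - destruct (wdist_vertex_le_dist A W B W2 i t ltac:(apply G) ltac:(apply G2) Hi Ht)
      as [l [Hl Hl']].
    exists (pv B W2 l). split.
    + apply INR_le. lra.
    + left. exact (between_pvert_geodesic B C W2 l G2 Hl).
  - destruct (wdist_vertex_le_dist A W C W3 i t ltac:(apply G) ltac:(apply G3) Hi Ht)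
      as [l [Hl Hl']].
    exists (pv C W3 l). split.
    + apply INR_le. lra.
    + right. exact (between_pvert_geodesic C A W3 l G3 Hl).
Qed.

Lemma wdist_geodesic_le_gromov_product w x z W : geodesic_word x z W ->
  exists i, i <= length W /\
    2 * wdist w (pv x W i) + wdist x z <= wdist w x + wdist w z + 4 * delta + 2.
Proof.
  (* Take the last vertex of the geodesic that is delta-close to a point between w
     and x; the next one is delta-close to a point between z and w. *)
  intros G.
  set (nearWX := fun i => exists a, wdist (pv x W i) a <= delta /\ between w a x).
  assert (H0 : nearWX 0).
  { exists x. rewrite pvert_0, wdist_refl. split; [lia|]. unfold between. rewrite wdist_refl. lia. }
  destruct (exists_boundary_index nearWX (length W) H0) as [i [[a [Ha Ba]] Hi]].
  assert (Hj : exists j b, i <= j <= S i /\ j <= length W /\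
                 wdist (pv x W j) b <= delta /\ between z b w).
  { destruct Hi as [->|[Hlt Hnot]].
    - exists (length W), z. rewrite (pvert_geodesic_end x z W G), wdist_refl.
      repeat split; try lia. unfold between. rewrite wdist_refl. lia.
    - destruct (geodesic_vertex_near_sides x z w W (S i) G Hlt) as [b [Hb [Bb|Bb]]].
      + exists (S i), b. repeat split; auto; lia.
      + exfalso. apply Hnot. now exists b. }
  destruct Hj as [j [b [Hij [Hj [Hb Bb]]]]].
  assert (Hi' : i <= length W) by lia.
  exists i. split; [exact Hi'|].
  assert (Bi := between_pvert_geodesic x z W i G Hi').
  assert (Dij := wdist_pvert_le x W i j ltac:(apply G) (proj1 Hij)).
  unfold between in *.
  assert (T1 := wdist_triangle x a (pv x W i)).
  assert (T2 := wdist_triangle (pv x W i) (pv x W j) z).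
  assert (T3 := wdist_triangle (pv x W j) b z).
  assert (T4 := wdist_triangle w a (pv x W i)).
  assert (T5 := wdist_triangle w b (pv x W j)).
  assert (T6 := wdist_triangle w (pv x W j) (pv x W i)).
  rewrite (wdist_sym a (pv x W i)), (wdist_sym a x), (wdist_sym z b), (wdist_sym b w),
    (wdist_sym z w), (wdist_sym (pv x W j) (pv x W i)), (wdist_sym b (pv x W j)) in *.
  lia.
Qed.

(* (x|y)_w <= (x|z)_w + 3 delta + 1 or (y|z)_w <= (x|z)_w + 3 delta + 1, for the
   Gromov product (x|y)_w, doubled and with the subtractions moved across. *)
Lemma four_point_condition w x y z :
  wdist w x + wdist w y + wdist x z <= wdist x y + wdist w x + wdist w z + (6 * delta + 2) \/
  wdist w y + wdist w z + wdist x z <= wdist y z + wdist w x + wdist w z + (6 * delta + 2).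
Proof.
  destruct (exists_geodesic_word x z) as [W G].
  destruct (wdist_geodesic_le_gromov_product w x z W G) as [i [Hi Hp]].
  destruct (geodesic_vertex_near_sides x z y W i G Hi) as [q [Hq [Bq|Bq]]];
    unfold between in Bq; set (p := pv x W i) in *;
    assert (T0 := wdist_triangle w p q); assert (T1 := wdist_triangle w q x);
    assert (T2 := wdist_triangle w q y); assert (T3 := wdist_triangle w q z);
    rewrite (wdist_sym q x), (wdist_sym q y), (wdist_sym q z), (wdist_sym p q),
      (wdist_sym x y), (wdist_sym y z) in *.
  - right. lia.
  - left. lia.
Qed.

Definition local_geodesic (x : nat -> Gr) (N r : nat) : Prop :=
  forall a b, a <= b -> b <= N -> b - a <= r -> wdist (x a) (x b) = b - a.

Section LocalGeodesics.
Hypothesis delta_pos : 0 < delta.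
Variable x : nat -> Gr.
Variable N : nat.
Hypothesis loc : local_geodesic x N (32 * delta).
Local Notation dist_from_start r := (wdist (x 0) (x (r * (16 * delta)))).

Lemma local_geodesic_step r : S (S r) * (16 * delta) <= N ->
  dist_from_start r + 16 * delta <= dist_from_start (S r) + (6 * delta + 2) ->
  dist_from_start (S r) + 16 * delta <= dist_from_start (S (S r)) + (6 * delta + 2).
Proof.
  intros HN IH. set (m := 16 * delta) in *.
  assert (E1 : wdist (x (r * m)) (x (S r * m)) = m) by (rewrite loc; simpl; lia).
  assert (E2 : wdist (x (S r * m)) (x (S (S r) * m)) = m) by (rewrite loc; simpl; lia).
  assert (E3 : wdist (x (r * m)) (x (S (S r) * m)) = 2 * m) by (rewrite loc; simpl; lia).
  (* The first alternative, together with IH, would give 16 delta <= 6 delta + 2. *)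
  destruct (four_point_condition (x (S r * m)) (x (r * m)) (x 0) (x (S (S r) * m))) as [H|H];
    rewrite (wdist_sym (x (S r * m)) (x (r * m))), (wdist_sym (x (S r * m)) (x 0)),
      E1, E2, E3 in H; rewrite ?(wdist_sym (x (r * m)) (x 0)) in H; lia.
Qed.

Lemma local_geodesic_progress r : S r * (16 * delta) <= N ->
  dist_from_start r + 16 * delta <= dist_from_start (S r) + (6 * delta + 2).
Proof.
  induction r as [|r IH]; intros HN.
  - simpl. rewrite Nat.add_0_r, wdist_refl, loc; lia.
  - apply local_geodesic_step; [exact HN|]. apply IH. simpl in *. lia.
Qed.

Lemma local_geodesic_growth r : r * (16 * delta) <= N ->
  r * (10 * delta - 2) <= dist_from_start r.
Proof.
  induction r as [|r IH]; intros HN; [simpl; lia|].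
  assert (Hstep := local_geodesic_progress r HN).
  assert (IH' := IH ltac:(simpl in HN; lia)).
  rewrite Nat.mul_succ_l. lia.
Qed.

Lemma local_geodesic_length_le : N <= 2 * wdist (x 0) (x N) + 48 * delta.
Proof.
  set (m := 16 * delta). assert (Hm : 0 < m) by lia.
  set (r := N / m). set (rem := N mod m).
  assert (Ediv : N = r * m + rem) by (rewrite Nat.mul_comm; apply Nat.div_mod; lia).
  assert (Hrem : rem < m) by (apply Nat.mod_upper_bound; lia).
  assert (Hgrow := local_geodesic_growth r ltac:(lia)).
  assert (Htail : wdist (x (r * m)) (x N) = rem) by (rewrite loc; lia).
  assert (T := wdist_triangle (x 0) (x N) (x (r * m))).
  rewrite (wdist_sym (x N)), Htail in T.
  assert (r * m <= r * (2 * (10 * delta - 2))) by (apply Nat.mul_le_mono_l; lia).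
  fold m in Hgrow. lia.
Qed.

End LocalGeodesics.
End SlimTriangles.
End WordMetric.

Section PowersOfCyclicallyMinimalWords.
Variable Gr : group.
Variable X : list Gr.
Variable delta : nat.
Hypothesis gen : generates Gr X.
Hypothesis delta_pos : 0 < delta.
Hypothesis hyp : hyperbolic Gr X (INR delta).
Variable V : list letter.
Hypothesis HV : is_word Gr X V.
Hypothesis CM : cyclically_minimal Gr X V.
Hypothesis long : 180 * delta <= length V.
Local Notation pv := (pvert Gr X).
Local Notation wdist := (wdist Gr X).

Lemma wpown_vertex_gap_le n g i j : i <= j -> j <= length (wpown V n) ->
  j - i <= 2 * wdist (pv g (wpown V n) i) (pv g (wpown V n) j) + 48 * delta.
Proof.
  intros Hij Hj. rewrite length_wpown in Hj.
  assert (Hloc : local_geodesic Gr X (fun a => pv g (wpown V n) (i + a)) (j - i) (32 * delta)).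
  { intros a b Hab Hb Hba.
    replace (b - a) with ((i + b) - (i + a)) by lia.
    apply wdist_pvert_wpown; auto; lia. }
  assert (H := local_geodesic_length_le Gr X gen delta hyp delta_pos _ _ Hloc).
  cbv beta in H. now rewrite Nat.add_0_r, (Nat.add_comm i), Nat.sub_add in H.
Qed.

Lemma wpown_vertex_gap_le_Rabs n g i j : i <= length (wpown V n) -> j <= length (wpown V n) ->
  (Rabs (INR i - INR j) <=
     2 * INR (wdist (pv g (wpown V n) i) (pv g (wpown V n) j)) + 48 * INR delta)%R.
Proof.
  intros Hi Hj.
  assert (Hnat : forall a b, a <= b -> b <= length (wpown V n) ->
            (INR b - INR a <= 2 * INR (wdist (pv g (wpown V n) a) (pv g (wpown V n) b))
                              + 48 * INR delta)%R).
  { intros a b Hab Hb. rewrite <- minus_INR by exact Hab.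
    replace 2%R with (INR 2) by reflexivity. replace 48%R with (INR 48) by (simpl; ring).
    rewrite <- !mult_INR, <- plus_INR. apply le_INR, wpown_vertex_gap_le; assumption. }
  destruct (Nat.le_ge_cases i j) as [Hij|Hji].
  - rewrite Rabs_minus_sym, Rabs_right by (apply Rge_minus, Rle_ge, le_INR, Hij).
    now apply Hnat.
  - rewrite Rabs_right by (apply Rge_minus, Rle_ge, le_INR, Hji).
    rewrite wdist_sym by exact gen. now apply Hnat.
Qed.

Lemma wpown_quasi_geodesic n : quasi_geodesic Gr X 4 (2520 * INR delta) (wpown V n).
Proof.
  intros g s t Hs Ht.
  assert (HU : is_word Gr X (wpown V n)) by now apply is_word_wpown.
  destruct (ifloor_spec s ltac:(lra)) as [Hs1 Hs2].
  destruct (ifloor_spec t ltac:(lra)) as [Ht1 Ht2].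
  assert (Hgap := wpown_vertex_gap_le_Rabs n g (ifloor s) (ifloor t)
                    ltac:(apply INR_le; lra) ltac:(apply INR_le; lra)).
  assert (Hfloor := wdist_floor_le_dist Gr X gen g (wpown V n) s t HU Hs Ht).
  assert (Hd1 : (1 <= INR delta)%R) by (apply (le_INR 1); lia).
  assert (Hst : (Rabs (s - t) <= Rabs (INR (ifloor s) - INR (ifloor t)) + 1)%R).
  { unfold Rabs. (repeat destruct (Rcase_abs _)); lra. }
  assert (Hpos := pos_INR
                    (wdist (pv g (wpown V n) (ifloor s)) (pv g (wpown V n) (ifloor t)))).
  lra.
Qed.

End PowersOfCyclicallyMinimalWords.

Open Scope R_scope.

Theorem lemma3p7 (Gr : group) (X : list Gr) (delta : nat) :
  NoDup X -> generates Gr X -> (0 < delta)%nat ->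
  hyperbolic Gr X (INR delta) ->
  forall V : list letter,
    is_word Gr X V -> cyclically_minimal Gr X V ->
    (180 * delta <= length V)%nat ->
    forall k : Z, quasi_geodesic Gr X 4 (2520 * INR delta) (wpowZ V k).
Proof.
  intros _ gen delta_pos hyp V HV CM long k. unfold wpowZ. destruct (Z.leb 0 k).
  - now apply wpown_quasi_geodesic.
  - apply wpown_quasi_geodesic; auto.
    + now apply is_word_winv.
    + now apply cyclically_minimal_winv.
    + now rewrite length_winv.
Qed.
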